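(* (1) In the basic and the lazy model, no algorithm solves the location discovery problem in fewer than $n-1$ rounds in the worst case. (2) In the perceptive model, no algorithm solves the location discovery problem in fewer than $n/2$ rounds in the worst case.
   Context: Model: $n$ agents are at distinct, arbitrary initial positions on a circle of circumference $1$ and act in synchronised unit-time rounds. Each agent has its own notion of right (clockwise) and left. At the start of a round each agent chooses a direction and moves at unit speed. Agents never pass: two moving agents that collide instantly reverse direction, and a moving agent hitting an idle one becomes idle while the idle one starts moving in the former's objective direction. There is no communication. At the end of each round every agent learns $\mathrm{dist}()$, the clockwise distance, in its own orientation, from its start-of-round to its end-of-round position. The three models differ as follows: - Basic: directions are in $\{\text{right},\text{left}\}$. - Lazy: directions are in $\{\text{idle},\text{right},\text{left}\}$. - Perceptive: as basic, but each agent additionally learns $\mathrm{coll}()$, the distance from its start position to its first collision in the round. Location discovery problem: each agent must determine the initial positions of all other agents relative to its own initial position. *)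

From mathcomp Require Import all_boot all_order all_algebra.
From mathcomp Require Import reals.
Set Implicit Arguments. Unset Strict Implicit. Unset Printing Implicit Defensive.
Import Order.TTheory GRing.Theory Num.Theory.
Local Open Scope ring_scope.

Inductive model := Basic | Lazy | Perceptive.

(** A direction chosen by an agent, in its OWN orientation. *)
Inductive dir := Idle | Right | Left.

Section LocationDiscovery.
Variable R : realType.
Variable n : nat.

(** Fractional part: points of the circle of circumference 1 are reals mod 1. *)
Definition frac (x : R) : R := x - (Num.floor x)%:~R.

Definition cwd (x y : R) : R := frac (y - x).

(** Clockwise distance from x to y in the orientation of an agent of
    chirality ch (ch = true : the agent's "right" is the global clockwise). *)
Definition owndist (ch : bool) (x y : R) : R := if ch then cwd x y else cwd y x.

Record config := Config { cpos : 'I_n -> R; cchir : 'I_n -> bool }.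

Definition valid_config (c : config) : Prop :=
  (forall k, 0 <= cpos c k < 1) /\ injective (cpos c).

(** What an agent observes at the end of a round: dist(), and, in the
    perceptive model only, coll() (None when the agent has no collision,
    and always None in the basic and lazy models). *)
Record obs := Obs { odist : R; ocoll : option R }.

(** An algorithm: for each agent, a choice of direction as a function of its
    own history of observations, and a final output (the list of clockwise
    distances, in its own orientation, from its initial position to the initial
    positions of the other agents).  Strategies may differ between agents
    (this covers agents with identities and randomised algorithms with fixed
    coin outcomes). *)
Record algorithm := Alg {
  strat  : 'I_n -> seq obs -> dir;
  output : 'I_n -> seq obs -> seq R }.

Definition valid_alg (M : model) (A : algorithm) : Prop :=
  M <> Lazy -> forall k h, strat A k h <> Idle.

Definition gvel (ch : bool) (d : dir) : int :=
  match d with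
  | Idle => 0
  | Right => if ch then 1 else -1
  | Left => if ch then -1 else 1
  end.

Definition rank (p : 'I_n -> R) (k j : 'I_n) : nat :=
  #|[pred m : 'I_n | cwd (p k) (p m) < cwd (p k) (p j)]|.

Definition target (p : 'I_n -> R) (s : int) (k : 'I_n) : 'I_n :=
  odflt k [pick j | rank p k j == `|(s %% (n%:Z))%Z|%N].

(** Net rotation of a round: with collisions (bounces / baton passing with idle
    agents) the agents behave as non-interacting virtual particles exchanging
    identities; since every moving particle travels exactly once around the
    circle, the set of positions is preserved and every agent moves
    (#clockwise movers - #counterclockwise movers) steps clockwise in the cyclic
    order of agents. *)
Definition rotation (ch : 'I_n -> bool) (d : 'I_n -> dir) : int :=
  \sum_(k < n) gvel (ch k) (d k).

Definition newpos (p : 'I_n -> R) (ch : 'I_n -> bool) (d : 'I_n -> dir) :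
  'I_n -> R := fun k => p (target p (rotation ch d) k).

(** Distance travelled by agent k before its first collision: the first
    collision of k happens when its virtual particle meets an oppositely moving
    one, i.e. at half the gap (in k's direction of motion) to the closest
    oppositely moving agent. *)
Definition meetdist (p : 'I_n -> R) (v : int) (k j : 'I_n) : R :=
  (if v == 1 then cwd (p k) (p j) else cwd (p j) (p k)) / 2.

Definition first_coll (p : 'I_n -> R) (ch : 'I_n -> bool) (d : 'I_n -> dir)
  (k : 'I_n) : option R :=
  let v := gvel (ch k) (d k) in
  let opp := [pred j : 'I_n | (v != 0) && (gvel (ch j) (d j) == - v)] in
  if [exists j, opp j]
  then Some (\big[Order.min/1]_(j | opp j) meetdist p v k j)
  else None.

Definition observe (M : model) (p : 'I_n -> R) (ch : 'I_n -> bool)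
  (d : 'I_n -> dir) (k : 'I_n) : obs :=
  Obs (owndist (ch k) (p k) (newpos p ch d k))
      (if M is Perceptive then first_coll p ch d k else None).

Fixpoint run (M : model) (A : algorithm) (c : config) (r : nat) :
  ('I_n -> R) * ('I_n -> seq obs) :=
  match r with
  | 0 => (cpos c, fun _ => [::])
  | r'.+1 =>
      let ph := run M A c r' in
      let p := ph.1 in let h := ph.2 in
      let d := fun k => strat A k (h k) in
      (newpos p (cchir c) d, fun k => rcons (h k) (observe M p (cchir c) d k))
  end.

Definition rel_positions (c : config) (k : 'I_n) : seq R :=
  [seq owndist (cchir c k) (cpos c k) (cpos c j) | j <- enum 'I_n & j != k].

Definition solves (M : model) (A : algorithm) (T : nat) : Prop :=
  forall c, valid_config c -> forall k : 'I_n,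
    perm_eq (output A k ((run M A c T).2 k)) (rel_positions c k).

End LocationDiscovery.

(* The adversary puts agent [a] at [(a + u a) / n] with offsets [u a] in [[0, 1)]. Every
   cyclic order of such a perturbed grid is that of the plain grid, so the trajectories
   (as permutations of grid slots) depend only on the directions chosen, and the
   observations of an agent [k] depend only on the offsets of the slots it ends its
   rounds in and, in the perceptive model, of the slot of its first collision partner.
   Hence within [T] rounds at most [T + 1] offsets reach [k] (at most [2T] in the
   perceptive model, where choosing the chiralities so that everybody moves clockwise
   in the first round makes that round collision free).  Taking offsets among more
   values than there are direction schedules, pigeonhole gives two configurations with
   the same schedule that differ only in an offset [k] never sees: [k] observes the
   same history in both, yet must output different answers. *)

From HB Require Import structures.
From Pilot Require Import Defs.
From mathcomp Require Import all_boot all_order all_algebra.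
From mathcomp Require Import reals.
From mathcomp Require Import ring lra zify.
From Stdlib Require Import FunctionalExtensionality.
Set Implicit Arguments. Unset Strict Implicit. Unset Printing Implicit Defensive.
Import Order.TTheory GRing.Theory Num.Theory.
Local Open Scope ring_scope.

Definition dir_ord (d : dir) : 'I_3 :=
  match d with
  | Idle => @Ordinal 3 0 isT | Right => @Ordinal 3 1 isT | Left => @Ordinal 3 2 isT
  end.
Definition ord_dir (o : 'I_3) : dir :=
  match val o with 0 => Idle | 1 => Right | _ => Left end.
Lemma dir_ordK : cancel dir_ord ord_dir.
Proof. by case. Qed.
HB.instance Definition _ := Finite.copy dir (can_type dir_ordK).

Lemma ffun_pigeonhole (m : nat) (V C : finType) (F : {ffun 'I_m -> V} -> C)
    (pos : C -> 'I_m) :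
  (0 < m)%N -> (#|C| < #|V|)%N ->
  exists g g', [/\ F g = F g', g != g' & forall i, i != pos (F g) -> g i = g' i].
Proof.
case: m F pos => // m F pos _ ltCV.
pose h g : C * {ffun 'I_m -> V} := (F g, [ffun i => g (lift (pos (F g)) i)]).
have [/existsP[g /existsP[g' /andP[/eqP[eF eg] neq]]] | noclash] :=
  boolP [exists g, exists g', (h g == h g') && (g != g')].
  exists g, g'; split=> // i; rewrite eq_sym => /unlift_some[j -> _].
  by have := congr1 (fun f : {ffun 'I_m -> V} => f j) eg; rewrite !ffunE -eF.
have h_inj : injective h.
  move=> g g' eh; apply/eqP; apply: contraR noclash => neq.
  by apply/existsP; exists g; apply/existsP; exists g'; rewrite eh eqxx.
have := @leq_card _ _ h h_inj; rewrite card_prod !card_ffun !card_ord expnS leqNgt.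
by rewrite ltn_mul2r ltCV expn_gt0 (leq_ltn_trans _ ltCV).
Qed.

Lemma bigmin_dominated d (T : orderType d) (I : finType) (x : T) (P Z : pred I)
    (F : I -> T) :
  (forall i, P i -> Z i -> exists2 a, P a && ~~ Z a & (F a <= F i)%O) ->
  \big[Order.min/x]_(i | P i) F i = \big[Order.min/x]_(i | P i && ~~ Z i) F i.
Proof.
move=> dom; apply: le_anti; apply/andP; split; apply: le_bigmin.
- exact: bigmin_le_id.
- by move=> i /andP[Pi _]; apply: bigmin_le_cond.
- exact: bigmin_le_id.
- move=> i Pi; case Zi: (Z i); last by apply: bigmin_le_cond; rewrite Pi Zi.
  have [a Pa Fai] := dom i Pi Zi.
  by apply: le_trans Fai; apply: bigmin_le_cond.
Qed.

Section CircleGrid.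
Variable R : realType.

Lemma frac_id (y : R) : 0 <= y < 1 -> Defs.frac y = y.
Proof. by move=> y01; rewrite /Defs.frac (@floor_def _ _ 0%R) ?subr0 //= add0r. Qed.

Lemma frac_subr1 (y : R) : 0 <= y < 1 -> Defs.frac (y - 1) = y.
Proof.
move=> /andP[y_ge0 y_lt1]; rewrite /Defs.frac (@floor_def _ _ (-1)%R).
  by rewrite intrN opprK subrK.
by rewrite intrD intrN; apply/andP; split; lra.
Qed.

Lemma ltr_natD_perturb (x1 x2 : nat) (e1 e2 : R) :
  -1 < e1 - e2 < 1 -> x1 <> x2 -> (x1%:R + e1 < x2%:R + e2) = (x1 < x2)%N.
Proof.
move=> /andP[lb ub] neq; case: (ltngtP x1 x2) => [||/neq//] lt12.
  by move: lt12; rewrite -addn1 -(ler_nat R) natrD => ?; lra.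
apply/negbTE; rewrite -leNgt.
by move: lt12; rewrite -addn1 -(ler_nat R) natrD => ?; lra.
Qed.

Variable n : nat.

Definition cgap (a b : 'I_n) : nat := (b + n - a) %% n.

Lemma cgap_le (a b : 'I_n) : (a <= b)%N -> cgap a b = (b - a)%N.
Proof.
by move=> le_ab; rewrite /cgap -addnBAC // modnDr modn_small //; have := ltn_ord b; lia.
Qed.

Lemma cgap_gt (a b : 'I_n) : (b < a)%N -> cgap a b = (b + n - a)%N.
Proof. by move=> lt_ba; rewrite /cgap modn_small //; have := ltn_ord a; lia. Qed.

Lemma cgap_inj (a : 'I_n) : injective (cgap a).
Proof.
move=> b c; have := ltn_ord a; have := ltn_ord b; have := ltn_ord c.
case: (leqP a b) => h1; case: (leqP a c) => h2;
  rewrite ?(cgap_le h1) ?(cgap_le h2) ?(cgap_gt h1) ?(cgap_gt h2) => *;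
  apply: val_inj => /=; lia.
Qed.

Lemma cgap_injl (b : 'I_n) : injective (cgap^~ b).
Proof.
move=> a c; have := ltn_ord a; have := ltn_ord b; have := ltn_ord c.
case: (leqP a b) => h1; case: (leqP c b) => h2;
  rewrite ?(cgap_le h1) ?(cgap_le h2) ?(cgap_gt h1) ?(cgap_gt h2) => *;
  apply: val_inj => /=; lia.
Qed.

Hypothesis n_gt0 : (0 < n)%N.
Variable u : 'I_n -> R.
Hypothesis u_range : forall a, 0 <= u a < 1.

Definition gridpos (a : 'I_n) : R := (a%:R + u a) / n%:R.

Lemma gridpos_range a : 0 <= gridpos a < 1.
Proof.
have [u_ge0 u_lt1] := andP (u_range a).
rewrite /gridpos divr_ge0 ?addr_ge0 //= ltr_pdivrMr ?ltr0n // mul1r.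
by have := ltn_ord a; rewrite -addn1 -(ler_nat R) natrD => ?; lra.
Qed.

Lemma gridpos_inj : injective gridpos.
Proof.
move=> a b; rewrite /gridpos => /(congr1 ( *%R^~ n%:R)).
rewrite !mulfVK ?pnatr_eq0 -?lt0n // => eq_ab.
have [ua_ge0 ua_lt1] := andP (u_range a); have [ub_ge0 ub_lt1] := andP (u_range b).
apply: val_inj; apply/eqP; rewrite eqn_leq; apply/andP; split;
  rewrite leqNgt; apply/negP; rewrite -addn1 -(ler_nat R) natrD => ?; lra.
Qed.

Lemma cwd_gridpos a b : cwd (gridpos a) (gridpos b) = ((cgap a b)%:R + u b - u a) / n%:R.
Proof.
have n_pos : 0 < n%:R :> R by rewrite ltr0n.
have n_neq0 : n%:R != 0 :> R by rewrite pnatr_eq0 -lt0n.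
have [ua_ge0 ua_lt1] := andP (u_range a); have [ub_ge0 ub_lt1] := andP (u_range b).
have a_lt : a%:R + 1 <= n%:R :> R by rewrite natr1 ler_nat.
have b_lt : b%:R + 1 <= n%:R :> R by rewrite natr1 ler_nat.
rewrite /cwd; have -> : gridpos b - gridpos a = (b%:R - a%:R + u b - u a) / n%:R.
  by rewrite /gridpos; field.
have lt_b_of : (b%:R - a%:R + u b - u a) / n%:R < 1.
  by rewrite ltr_pdivrMr // mul1r; have := ler0n R a; lra.
case: (leqP a b) => [le_ab | lt_ba].
  rewrite cgap_le // natrB //; apply: frac_id; rewrite lt_b_of andbT.
  apply: divr_ge0; last exact: ltW.
  have [->|ne_ab] := eqVneq a b; first by rewrite subrr add0r subrr.
  have : (a < b)%N by rewrite ltn_neqAle le_ab andbT; apply: contraNneq ne_ab => /val_inj->.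
  by rewrite -addn1 -(ler_nat R) natrD => ?; lra.
have lt_ba' : b%:R + 1 <= a%:R :> R by rewrite natr1 ler_nat.
rewrite cgap_gt // natrB ?natrD; last by have := ltn_ord a; lia.
have -> : (b%:R - a%:R + u b - u a) / n%:R
    = (b%:R + n%:R - a%:R + u b - u a) / n%:R - 1 :> R by field.
apply: frac_subr1; apply/andP; split.
  by apply: divr_ge0; [have := ler0n R b; lra | exact: ltW].
by rewrite ltr_pdivrMr // mul1r; lra.
Qed.

Lemma cwd_gridpos_ltl x y1 y2 :
  (cwd (gridpos x) (gridpos y1) < cwd (gridpos x) (gridpos y2)) = (cgap x y1 < cgap x y2)%N.
Proof.
rewrite !cwd_gridpos ltr_pM2r ?invr_gt0 ?ltr0n //.
have [->|ne] := eqVneq y1 y2; first by rewrite ltxx ltnn.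
have [? ?] := andP (u_range y1); have [? ?] := andP (u_range y2).
rewrite -!addrA; apply: ltr_natD_perturb; first by apply/andP; split; lra.
by move=> /cgap_inj eq_y; rewrite eq_y eqxx in ne.
Qed.

Lemma cwd_gridpos_ltr x y1 y2 :
  (cwd (gridpos y1) (gridpos x) < cwd (gridpos y2) (gridpos x)) = (cgap y1 x < cgap y2 x)%N.
Proof.
rewrite !cwd_gridpos ltr_pM2r ?invr_gt0 ?ltr0n //.
have [->|ne] := eqVneq y1 y2; first by rewrite ltxx ltnn.
have [? ?] := andP (u_range y1); have [? ?] := andP (u_range y2).
rewrite -!addrA; apply: ltr_natD_perturb; first by apply/andP; split; lra.
by move=> /cgap_injl eq_y; rewrite eq_y eqxx in ne.
Qed.

End CircleGrid.

Lemma target_eq (R : realType) (n : nat) (p q : 'I_n -> R) (s : int) :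
  (forall a b c, (cwd (p a) (p b) < cwd (p a) (p c)) = (cwd (q a) (q b) < cwd (q a) (q c))) ->
  target p s = target q s.
Proof.
move=> same_order; apply: functional_extensionality => i.
rewrite /target; congr odflt; apply: eq_pick => j /=; congr (_ == _).
by rewrite /rank; apply: eq_card => a; rewrite !inE same_order.
Qed.

Section Adversary.
Variables (R : realType) (n : nat).
Hypothesis n_gt0 : (0 < n)%N.
Variables (M : model) (A : algorithm R n) (T : nat) (ch : 'I_n -> bool).

Definition schedule := {ffun 'I_T -> {ffun 'I_n -> dir}}.

Definition sched_dirs (s : schedule) (r : nat) (i : 'I_n) : dir :=
  if insub r is Some r' then s r' i else Idle.

Local Notation K := #|schedule|.+1.

Definition grid := {ffun 'I_n -> 'I_K}.

Definition offset (g : grid) (a : 'I_n) : R := (g a)%:R / K%:R.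

Lemma offset_range g a : 0 <= offset g a < 1.
Proof.
rewrite /offset divr_ge0 //= ltr_pdivrMr ?ltr0n // mul1r ltr_nat; exact: ltn_ord.
Qed.

Lemma offset_inj g g' a : offset g a = offset g' a -> g a = g' a.
Proof.
move=> /(congr1 ( *%R^~ K%:R)); rewrite !mulfVK ?pnatr_eq0 //.
by move=> /eqP; rewrite eqr_nat => /eqP /val_inj.
Qed.

Definition grid_config (g : grid) : config R n := Config (gridpos (offset g)) ch.

Lemma grid_config_valid g : valid_config (grid_config g).
Proof. by split; [apply: gridpos_range | apply: gridpos_inj] => //; apply: offset_range. Qed.

Definition base : 'I_n -> R := gridpos (fun _ => 0).

Lemma zero_offset_range : forall a : 'I_n, 0 <= (0 : R) < 1.
Proof. by move=> _; rewrite lexx ltr01. Qed.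

Lemma target_grid (g : grid) (sl : 'I_n -> 'I_n) s :
  target (fun a => gridpos (offset g) (sl a)) s = target (fun a => base (sl a)) s.
Proof.
apply: target_eq => a b c.
by rewrite /base !cwd_gridpos_ltl //; [apply: zero_offset_range | apply: offset_range].
Qed.

(* [slot s r i] is the slot of the grid where agent [i] stands after [r] rounds. *)
Fixpoint slot (s : schedule) (r : nat) : 'I_n -> 'I_n :=
  if r is r'.+1 then
    let sl := slot s r' in
    fun i => sl (target (fun a => base (sl a)) (rotation ch (sched_dirs s r')) i)
  else id.

Definition schedule_of (g : grid) : schedule :=
  [ffun r : 'I_T => [ffun i => strat A i ((run M A (grid_config g) r).2 i)]].

Lemma sched_dirs_of g r : (r < T)%N ->
  sched_dirs (schedule_of g) r = fun i => strat A i ((run M A (grid_config g) r).2 i).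
Proof.
by move=> lt_rT; apply: functional_extensionality => i; rewrite /sched_dirs insubT !ffunE.
Qed.

Lemma run_grid_pos g r : (r <= T)%N ->
  (run M A (grid_config g) r).1 = fun i => gridpos (offset g) (slot (schedule_of g) r i).
Proof.
elim: r => [|r IH] le_rT //=.
by rewrite (IH (ltnW le_rT)) -(sched_dirs_of g le_rT) /newpos target_grid.
Qed.

Lemma gridpos_offset_eq (g g' : grid) a : g a = g' a ->
  gridpos (offset g) a = gridpos (offset g') a.
Proof. by rewrite /gridpos /offset => ->. Qed.

Variable k : 'I_n.

Definition kvel (s : schedule) r := gvel (ch k) (sched_dirs s r k).

Definition opp_mover (s : schedule) r : pred 'I_n :=
  [pred j | (kvel s r != 0) && (gvel (ch j) (sched_dirs s r j) == - kvel s r)].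

Definition base_meet (s : schedule) r (i : 'I_n) : R :=
  meetdist (fun a => base (slot s r a)) (kvel s r) k i.

(* Only when the opposite mover standing in slot [j] is strictly nearer to [k] than
   every opposite mover in another slot can the offset of [j] show in [coll()]. *)
Definition coll_partner (s : schedule) r (j : 'I_n) : bool :=
  [exists i, [&& opp_mover s r i, slot s r i == j &
     [forall a, opp_mover s r a && (slot s r a != j) ==> (base_meet s r i < base_meet s r a)]]].

Definition coll_partners (s : schedule) : {set 'I_n} :=
  [set j | [exists r : 'I_T, coll_partner s r j]].

Definition revealed (s : schedule) : {set 'I_n} :=
  k |: ([set slot s r.+1 k | r : 'I_T] :|: if M is Perceptive then coll_partners s else set0).

Lemma meetdist_grid_lt (g : grid) (sl : 'I_n -> 'I_n) v i j :
  (meetdist (fun a => gridpos (offset g) (sl a)) v k i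
     < meetdist (fun a => gridpos (offset g) (sl a)) v k j) =
  (meetdist (fun a => base (sl a)) v k i < meetdist (fun a => base (sl a)) v k j).
Proof.
have off := offset_range g; have zero := zero_offset_range.
rewrite /meetdist !ltr_pM2r ?invr_gt0 ?ltr0n //.
by case: (v == 1); rewrite /base ?cwd_gridpos_ltl ?cwd_gridpos_ltr.
Qed.

Lemma first_coll_grid_eq (g g' : grid) s r j :
  (forall a, a != j -> g a = g' a) -> slot s r k != j -> ~~ coll_partner s r j ->
  first_coll (fun a => gridpos (offset g) (slot s r a)) ch (sched_dirs s r) k =
  first_coll (fun a => gridpos (offset g') (slot s r a)) ch (sched_dirs s r) k.
Proof.
move=> eq_off k_not_j no_partner.
rewrite /first_coll; case: ifP => // _; congr Some.
set in_j := [pred i | slot s r i == j].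
have dominated (h : grid) i : opp_mover s r i -> in_j i -> exists2 a,
    opp_mover s r a && ~~ in_j a &
    (meetdist (fun a => gridpos (offset h) (slot s r a)) (kvel s r) k a <=
     meetdist (fun a => gridpos (offset h) (slot s r a)) (kvel s r) k i).
  move=> opp_i /eqP j_i; move: no_partner; rewrite negb_exists => /forallP /(_ i).
  rewrite opp_i j_i eqxx /= negb_forall => /existsP[a]; rewrite negb_imply => /andP[opp_a].
  by exists a => //; rewrite leNgt meetdist_grid_lt.
rewrite -/(kvel s r) -/(opp_mover s r).
rewrite (bigmin_dominated _ (dominated g)) (bigmin_dominated _ (dominated g')).
apply: eq_bigr => i /andP[_ not_j].
by rewrite /meetdist !(@gridpos_offset_eq g g') //; apply: eq_off.
Qed.

Lemma slot_unrevealed s r j : j \notin revealed s -> (r <= T)%N -> slot s r k != j.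
Proof.
move=> j_unrev; case: r => [|r] le_rT; apply: contraNneq j_unrev => <-.
  exact: setU11.
by rewrite !inE; apply/orP; right; apply/orP; left; apply/imsetP; exists (Ordinal le_rT).
Qed.

Lemma coll_partner_unrevealed s r j : M = Perceptive ->
  j \notin revealed s -> (r < T)%N -> ~~ coll_partner s r j.
Proof.
move=> perceptive j_unrev lt_rT; apply: contraNN j_unrev => partner.
rewrite !inE perceptive; apply/orP; right; apply/orP; right.
by rewrite inE; apply/existsP; exists (Ordinal lt_rT).
Qed.

Lemma history_grid_eq (g g' : grid) j :
  schedule_of g' = schedule_of g -> (forall a, a != j -> g a = g' a) ->
  j \notin revealed (schedule_of g) ->
  forall r, (r <= T)%N -> (run M A (grid_config g) r).2 k = (run M A (grid_config g') r).2 k.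
Proof.
move=> same_sched eq_off j_unrev; elim=> [|r IH] le_rT //=.
have lt_rT : (r < T)%N := le_rT.
rewrite (IH (ltnW lt_rT)) -!(sched_dirs_of _ lt_rT) same_sched.
rewrite !(run_grid_pos _ (ltnW lt_rT)) same_sched /observe /newpos !target_grid.
have slot_r := slot_unrevealed j_unrev (ltnW le_rT).
have slot_r1 := slot_unrevealed j_unrev le_rT.
rewrite !(@gridpos_offset_eq g g' (slot _ r k)) ?eq_off //.
rewrite !(@gridpos_offset_eq g g' (slot _ r.+1 k)) ?eq_off //.
congr (rcons _ (Obs _ _)); case perceptive: M => //.
exact: first_coll_grid_eq (coll_partner_unrevealed perceptive j_unrev lt_rT).
Qed.

Lemma coll_partner_uniq s r j1 j2 : coll_partner s r j1 -> coll_partner s r j2 -> j1 = j2.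
Proof.
move=> /existsP[i1 /and3P[opp1 /eqP slot1 near1]] /existsP[i2 /and3P[opp2 /eqP slot2 near2]].
apply/eqP; apply: contraT => ne12.
have lt12 : base_meet s r i1 < base_meet s r i2.
  by apply: (implyP (forallP near1 i2)); rewrite opp2 slot2 eq_sym ne12.
have lt21 : base_meet s r i2 < base_meet s r i1.
  by apply: (implyP (forallP near2 i1)); rewrite opp1 slot1 ne12.
by have := lt_trans lt12 lt21; rewrite ltxx.
Qed.

Lemma card_revealed s :
  (#|revealed s| <= T.+1 + if M is Perceptive then #|coll_partners s| else 0)%N.
Proof.
rewrite cardsU1 -add1n -addnA leq_add ?leq_b1 //.
set X := [set slot s r.+1 k | r : 'I_T].
set Y := (if M is Perceptive then coll_partners s else set0).
apply: leq_trans (leq_addr #|X :&: Y| _) _.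
rewrite cardsUI leq_add //; first by apply: leq_trans (leq_imset_card _ _) _; rewrite card_ord.
by rewrite /Y; case: M; rewrite ?cards0.
Qed.

Lemma card_coll_partners s :
  (forall j, ~~ coll_partner s 0 j) -> (#|coll_partners s| <= T.-1)%N.
Proof.
move=> no_partner0; have [T0 | T_gt0] := posnP T.
  rewrite T0 leqn0 cards_eq0; apply/eqP/setP => j; rewrite !inE.
  by apply/negbTE/existsPn => -[r lt_rT]; move: lt_rT; rewrite T0.
pose partner (r : 'I_T) := odflt k [pick j | coll_partner s r j].
have sub : coll_partners s \subset partner @: [set~ Ordinal T_gt0].
  apply/subsetP => j; rewrite inE => /existsP[r partner_r]; apply/imsetP; exists r.
    by rewrite !inE; apply: contraTneq partner_r => ->; apply: no_partner0.
  rewrite /partner; case: pickP => [j' partner_r' | /(_ j)]; last by rewrite partner_r.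
  exact: coll_partner_uniq partner_r partner_r'.
apply: leq_trans (subset_leq_card sub) _; apply: leq_trans (leq_imset_card _ _) _.
by rewrite cardsC1 card_ord.
Qed.

(* Agents with [ch i = (strat A i [::] == Right)] all move clockwise in the first round. *)
Lemma no_coll_partner_round0 (g : grid) j :
  (forall i, strat A i [::] <> Idle) -> (forall i, ch i = (strat A i [::] == Right)) ->
  ~~ coll_partner (schedule_of g) 0 j.
Proof.
move=> moving chir; apply/existsPn => i; apply/negP => /and3P[/andP[+ +] _ _].
rewrite /kvel; case: (ltnP 0 T) => [T_gt0 | T_le0].
  2: by rewrite /sched_dirs insubF // ltnNge T_le0.
rewrite (sched_dirs_of g T_gt0) /=.
have clockwise a : gvel (ch a) (strat A a [::]) = 1.
  by rewrite chir; case: (strat A a [::]) (moving a) => [/(_ erefl) | |].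
by rewrite !clockwise.
Qed.

Lemma rel_positions_grid_inj (g g' : grid) j : j != k -> (forall a, a != j -> g a = g' a) ->
  perm_eq (rel_positions (grid_config g) k) (rel_positions (grid_config g') k) -> g = g'.
Proof.
move=> j_ne_k eq_off /(@perm_big R +%R 0 R _ _ xpredT id).
rewrite /rel_positions !big_map !big_filter !big_enum_cond /=.
rewrite (bigD1 j j_ne_k) [in RHS](bigD1 j j_ne_k) /=.
have off_k : offset g k = offset g' k by rewrite /offset eq_off // eq_sym.
have pos_k : gridpos (offset g) k = gridpos (offset g') k by rewrite /gridpos off_k.
rewrite (eq_bigr (fun i => owndist (ch k) (gridpos (offset g') k) (gridpos (offset g') i))).
  2: by move=> i /andP[_ i_ne_j]; rewrite pos_k (@gridpos_offset_eq g g' i) // eq_off.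
have n_neq0 : (n%:R : R)^-1 != 0 by rewrite invr_eq0 pnatr_eq0 -lt0n.
move/addIr; rewrite /owndist !(cwd_gridpos n_gt0 (offset_range _)) -!addrA off_k.
move=> eq_dist.
have off_j : offset g j = offset g' j.
  by move: eq_dist; case: (ch k) => /(mulIf n_neq0) /addrI; [move/addIr | move/addrI/oppr_inj].
apply/ffunP => a; have [->|a_ne_j] := eqVneq a j; last exact: eq_off.
exact: offset_inj.
Qed.

Lemma indistinguishable :
  (forall g, #|revealed (schedule_of g)| < n)%N -> ~ solves M A T.
Proof.
move=> few_revealed solved.
pose unrevealed s := odflt k [pick j | j \notin revealed s].
have [g [g' [same_sched neq_gg' eq_off]]] :=
  ffun_pigeonhole schedule_of unrevealed n_gt0 (eq_leq (esym (card_ord K))).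
set j := unrevealed _ in eq_off.
have j_unrev : j \notin revealed (schedule_of g).
  rewrite /j /unrevealed; case: pickP => // all_revealed.
  have := few_revealed g; rewrite ltnNge => /negP[].
  rewrite -{1}(card_ord n) -cardsT subset_leq_card //.
  by apply/subsetP => i _; apply/negbFE/all_revealed.
have j_ne_k : j != k by apply: contraNneq j_unrev => ->; apply: setU11.
have same_hist := history_grid_eq (esym same_sched) eq_off j_unrev (leqnn T).
have out_g := solved _ (grid_config_valid g) k; rewrite same_hist in out_g.
have out_g' := solved _ (grid_config_valid g') k.
move: neq_gg'; rewrite (rel_positions_grid_inj j_ne_k eq_off) ?eqxx //.
by rewrite perm_sym in out_g; apply: perm_trans out_g out_g'.
Qed.

End Adversary.

Theorem lemma5 (R : realType) (n : nat) :
  (forall M : model, M = Basic \/ M = Lazy ->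
     forall (A : algorithm R n) (T : nat),
       valid_alg M A -> (T < n.-1)%N -> ~ solves M A T) /\
  ((1 < n)%N ->
     forall (A : algorithm R n) (T : nat),
       valid_alg Perceptive A -> (2 * T < n)%N -> ~ solves Perceptive A T).
Proof.
split=> [M basic_or_lazy A T _ lt_T | n_gt1 A T valid lt_2T].
  have n_gt0 : (0 < n)%N by lia.
  apply: (@indistinguishable R n n_gt0 M A T (fun _ => true) (Ordinal n_gt0)) => g.
  apply: leq_ltn_trans (card_revealed _ _ _ _ _) _.
  by case: basic_or_lazy => ->; rewrite addn0; lia.
have n_gt0 : (0 < n)%N by lia.
have moving i : strat A i [::] <> Idle by apply: valid.
pose k := Ordinal n_gt0.
apply: (@indistinguishable R n n_gt0 Perceptive A T (fun i => strat A i [::] == Right) k) => g.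
apply: leq_ltn_trans (card_revealed _ _ _ _ _) _.
have := card_coll_partners
  (fun j => no_coll_partner_round0 Perceptive k g j moving (fun=> erefl)).
lia.
Qed.
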